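(* Let $S\subset[m]$ and $w\in\Lambda_S$, and let $JF(w)=\big(\frac{\partial F_i}{\partial v_j}(w)\big)_{i,j}$ be the $m\times m$ Jacobian of $F$ at $w$ (computed from the formula for $F$). Then all eigenvalues of $JF(w)$ other than the numbers $\frac{\partial L}{\partial v_i}(w)$, $i\notin S$, are real and nonpositive; more precisely, the spectrum of $JF(w)$ is $\{\frac{\partial L}{\partial v_i}(w): i\notin S\}$ together with the spectrum of a matrix that is self-adjoint for a suitable inner product and negative semidefinite. In particular $JF(w)$ has a real positive eigenvalue if and only if there is $i\in[m]$ with $w_i=0$ and $\frac{\partial L}{\partial v_i}(w)>0$.
   Context: $H=(V,E)$ is a finite hypergraph with $V=[m]$, $|E|=N\ge1$, hyperedges nonempty subsets of $[m]$, each vertex in at least one hyperedge. For $v\in\mathbb R^m$ and $I\in E$, $v_I=\sum_{i\in I}v_i$. Fix $0<c<1/N$, $\Delta=\{x\in\mathbb R^m: x_i\ge0,\ \sum_i x_i=1,\ x_I\ge c\ \forall I\in E\}$. $L(v)=-\sum_i v_i+\frac1N\sum_{I\in E}\log v_I$ and $F_i(v)=-v_i+\frac1N\sum_{I\ni i}\frac{v_i}{v_I}=v_i\frac{\partial L}{\partial v_i}(v)$. For $S\subset[m]$, $\Delta_S=\{v\in\Delta: v_i=0\iff i\notin S\}$ and $\Lambda_S=\{v\in\Delta_S:\frac{\partial L}{\partial v_i}(v)=0\ \forall i\in S\}$. *)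

From HB Require Import structures.
From mathcomp Require Import all_boot all_order all_algebra.
From mathcomp Require Import all_classical all_reals all_analysis.
From mathcomp Require Import complex.
Set Implicit Arguments. Unset Strict Implicit. Unset Printing Implicit Defensive.
Import Order.TTheory GRing.Theory Num.Theory.
Import numFieldNormedType.Exports.
Local Open Scope ring_scope.

Section HG.
Variables (R : realType) (m : nat).

Definition vsum (v : 'rV[R]_m) (I : {set 'I_m}) : R := \sum_(i in I) v 0 i.

Definition ej (j : 'I_m) : 'rV[R]_m := delta_mx 0 j.

Definition partial (f : 'rV[R]_m -> R) (j : 'I_m) (x : 'rV[R]_m) : R :=
  'D_(ej j) f x.

Variable E : {set {set 'I_m}}.

Definition hypergraph : Prop :=
  (0 < #|E|)%N /\ (forall I, I \in E -> (0 < #|I|)%N) /\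
  (forall i : 'I_m, exists2 I, I \in E & i \in I).

Definition Nr : R := (#|E|)%:R.

Definition Lf (v : 'rV[R]_m) : R :=
  - (\sum_i v 0 i) + Nr^-1 * \sum_(I in E) ln (vsum v I).

Definition Ff (i : 'I_m) (v : 'rV[R]_m) : R :=
  - v 0 i + Nr^-1 * \sum_(I in E | i \in I) (v 0 i / vsum v I).

Definition JF (w : 'rV[R]_m) : 'M[R]_m :=
  \matrix_(i, j) partial (Ff i) j w.

Variable c : R.

Definition Delta (x : 'rV[R]_m) : Prop :=
  (forall i, 0 <= x 0 i) /\ \sum_i x 0 i = 1 /\
  (forall I, I \in E -> c <= vsum x I).

Definition Delta_S (S : {set 'I_m}) (v : 'rV[R]_m) : Prop :=
  Delta v /\ (forall i, v 0 i = 0 <-> i \notin S).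

Definition Lambda_S (S : {set 'I_m}) (v : 'rV[R]_m) : Prop :=
  Delta_S S v /\ (forall i, i \in S -> partial Lf i v = 0).

End HG.

Definition ceigen (R : realType) (n : nat) (A : 'M[R]_n) (z : R[i]) : bool :=
  eigenvalue (map_mx (real_complex R) A) z.

From HB Require Import structures.
From mathcomp Require Import all_boot all_order all_algebra.
From mathcomp Require Import all_classical all_reals all_analysis.
From mathcomp Require Import complex.
From mathcomp Require Import ring lra.
Set Implicit Arguments. Unset Strict Implicit. Unset Printing Implicit Defensive.
Import Order.TTheory GRing.Theory Num.Theory.
Import numFieldNormedType.Exports.
Local Open Scope ring_scope.

(* Since F_i = v_i dL/dv_i, the Jacobian at w is JF = diag(grad L) + diag(w) hess L,
   where hess L = - 1/N sum_I 1_I 1_I^T / w_I^2 is symmetric negative semidefinite.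
   For i \notin S we have w_i = 0, so row i of JF is (dL/dv_i) e_i and dL/dv_i is an
   eigenvalue.  On S the gradient vanishes, and the rest of the spectrum is that of
   the S x S block diag(w_S) hess L_SS; since w_S > 0 this block is self-adjoint and
   negative semidefinite for the inner product weighted by diag(w_S), so its complex
   eigenvalues are real and nonpositive. *)

Lemma eigenvalue_trmx (F : fieldType) n (A : 'M[F]_n) a :
  eigenvalue A^T a = eigenvalue A a.
Proof.
rewrite !eigenvalue_root_char /char_poly; congr (root _ a).
rewrite -det_tr /char_poly_mx linearB /= tr_scalar_mx map_trmx.
by congr (\det (_ - _)); apply/matrixP => i j; rewrite !mxE.
Qed.

Lemma eigenvalue_colP (F : fieldType) n (A : 'M[F]_n) a :
  reflect (exists2 v : 'cV_n, A *m v = a *: v & v != 0) (eigenvalue A a).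
Proof.
rewrite -eigenvalue_trmx; apply: (iffP eigenvalueP) => -[v Av v0]; exists v^T;
  rewrite ?trmx_eq0 // -[LHS]trmxK trmx_mul ?trmxK ?Av linearZ //=.
Qed.

(* The rows of sel_mx S are the unit vectors e_i, i \in S, in enum order, so that
   x *m (sel_mx S)^T is the restriction of x to the coordinates in S. *)
Definition sel_mx (R : nzRingType) m (S : {set 'I_m}) : 'M[R]_(#|S|, m) :=
  \matrix_(a, i) (enum_val a == i)%:R.

Lemma map_sel_mx (R R' : nzRingType) (f : {rmorphism R -> R'}) m (S : {set 'I_m}) :
  map_mx f (sel_mx R S) = sel_mx R' S.
Proof. by apply/matrixP => a i; rewrite !mxE rmorph_nat. Qed.

Section Selection.
Variables (R : nzRingType) (m : nat) (S : {set 'I_m}).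
Local Notation sel := (sel_mx R S).

Lemma mulmx_sel_trE n (A : 'M[R]_(n, m)) i a : (A *m sel^T) i a = A i (enum_val a).
Proof.
rewrite !mxE (bigD1 (enum_val a)) //= big1 ?addr0 => [|j ne]; rewrite !mxE.
  by rewrite eqxx mulr1.
by rewrite eq_sym (negbTE ne) mulr0.
Qed.

Lemma sel_mx_mul_tr : sel *m sel^T = 1%:M.
Proof. by apply/matrixP => a b; rewrite mulmx_sel_trE !mxE (inj_eq enum_val_inj). Qed.

Lemma sel_tr_mul_selE i j : (sel^T *m sel) i j = ((i \in S) && (i == j))%:R.
Proof.
rewrite mxE (eq_bigr (fun a => (enum_val a == i)%:R * (enum_val a == j)%:R :> R));
  last by move=> a _; rewrite !mxE.
rewrite -(big_enum_val (fun k => (k == i)%:R * (k == j)%:R)) /=.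
case: (boolP (i \in S)) => iS /=.
  rewrite (bigD1 i) //= big1 => [|k /andP[_ /negbTE ->]]; last by rewrite mul0r.
  by rewrite eqxx mul1r addr0.
rewrite big1 // => k kS; case: eqP => [ki|_]; last by rewrite mul0r.
by move: iS; rewrite -ki kS.
Qed.

Lemma diag_mx_sel_tr (d : 'rV[R]_m) :
  sel^T *m diag_mx (d *m sel^T) = diag_mx d *m sel^T.
Proof.
apply/matrixP => i a; rewrite mul_mx_diag mul_diag_mx mxE [RHS]mxE mulmx_sel_trE !mxE.
by case: eqP => [->|_]; rewrite ?mulr1 ?mul1r ?mulr0 ?mul0r.
Qed.

Lemma diag_mx_sel_tr_sel (d : 'rV[R]_m) :
  (forall i, i \notin S -> d 0 i = 0) -> diag_mx d *m (sel^T *m sel) = diag_mx d.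
Proof.
move=> d0; apply/matrixP => i j; rewrite mul_diag_mx mxE sel_tr_mul_selE [RHS]mxE.
case: (boolP (i \in S)) => iS /=; last by rewrite d0 // mul0r mul0rn.
by rewrite mulr_natr.
Qed.

Lemma diag_mx_sel_tr_eq0 (d : 'rV[R]_m) :
  (forall i, i \in S -> d 0 i = 0) -> diag_mx d *m sel^T = 0.
Proof.
move=> d0; apply/matrixP => i a; rewrite mulmx_sel_trE !mxE.
by case: eqP => // ->; rewrite d0 ?enum_valP // mul0rn.
Qed.

End Selection.

(* The S x S block of diag_mx w *m M, conjugated by diag(w_S). *)
Definition reduced_mx (R : nzRingType) m (S : {set 'I_m}) (M : 'M[R]_m) (w : 'rV[R]_m) :
  'M[R]_#|S| := sel_mx R S *m M *m (sel_mx R S)^T *m diag_mx (w *m (sel_mx R S)^T).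

Lemma map_reduced_mx (R R' : nzRingType) (f : {rmorphism R -> R'}) m (S : {set 'I_m}) M w :
  map_mx f (reduced_mx S M w) = reduced_mx S (map_mx f M) (map_mx f w).
Proof. by rewrite /reduced_mx !map_mxM map_diag_mx map_mxM -map_trmx map_sel_mx. Qed.

Section Reduction.
Variables (F : fieldType) (m : nat) (S : {set 'I_m}) (g w : 'rV[F]_m) (M : 'M[F]_m).
Hypotheses (g_S : forall i, i \in S -> g 0 i = 0)
  (w_notS : forall i, i \notin S -> w 0 i = 0) (w_S : forall i, i \in S -> w 0 i != 0).
Local Notation sel := (sel_mx F S).
Local Notation J := (diag_mx g + diag_mx w *m M).

Lemma eigenvalue_outside j : j \notin S -> eigenvalue J (g 0 j).
Proof.
move=> jS; apply/eigenvalueP; exists (delta_mx 0 j).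
  by rewrite mulmxDr mulmxA -!rowE !row_diag_mx w_notS // scale0r mul0mx addr0.
by apply/rV0Pn; exists j; rewrite mxE !eqxx oner_neq0.
Qed.

Lemma eigenvalue_reduced_sub z : eigenvalue (reduced_mx S M w) z -> eigenvalue J z.
Proof.
case/eigenvalue_colP => y Ay y0; apply/eigenvalue_colP.
set D := diag_mx (w *m sel^T).
exists (sel^T *m D *m y).
  rewrite mulmxDl !mulmxA (diag_mx_sel_tr_eq0 g_S) !mul0mx add0r.
  have -> : diag_mx w *m M *m sel^T *m D *m y = diag_mx w *m sel^T *m (reduced_mx S M w *m y).
    by rewrite /reduced_mx -{1}(diag_mx_sel_tr_sel w_notS) !mulmxA.
  by rewrite Ay -diag_mx_sel_tr scalemxAr.
apply: contra y0 => /eqP Y0.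
have : sel *m (sel^T *m D *m y) = D *m y by rewrite !mulmxA sel_mx_mul_tr mul1mx.
rewrite Y0 mulmx0 => /esym/matrixP Dy; apply/eqP/matrixP => a b; rewrite mxE.
move: (Dy a b); rewrite mul_diag_mx mxE mulmx_sel_trE [RHS]mxE => /eqP.
by rewrite mulf_eq0 (negbTE (w_S (enum_valP a))) => /eqP.
Qed.

Lemma eigenvalue_reduction z : eigenvalue J z ->
  (exists2 j, j \notin S & z = g 0 j) \/ eigenvalue (reduced_mx S M w) z.
Proof.
case/eigenvalueP => x xJ x0.
have uS : x *m diag_mx w *m sel^T *m sel = x *m diag_mx w.
  by rewrite -!mulmxA (diag_mx_sel_tr_sel w_notS).
have [u0|u0] := eqVneq (x *m diag_mx w *m sel^T) 0; [left|right].
  have xw0 : x *m diag_mx w = 0 by rewrite -uS u0 mul0mx.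
  move: xJ; rewrite mulmxDr mulmxA xw0 mul0mx addr0 => /matrixP xg.
  have [j xj] := rV0Pn _ x0.
  have zg : z = g 0 j.
    by apply: (mulIf xj); move: (xg 0 j); rewrite mul_mx_diag !mxE mulrC => ->.
  exists j => //; apply: contra xj => jS; apply/eqP.
  move/matrixP: xw0 => /(_ 0 j); rewrite mul_mx_diag !mxE => /eqP.
  by rewrite mulf_eq0 (negbTE (w_S jS)) orbF => /eqP.
apply/eigenvalueP; exists (x *m diag_mx w *m sel^T) => //.
have xwM : x *m diag_mx w *m M = z *: x - x *m diag_mx g.
  by rewrite -xJ mulmxDr mulmxA addrAC subrr add0r.
rewrite /reduced_mx !mulmxA uS xwM mulmxBl -(mulmxA x (diag_mx g)) (diag_mx_sel_tr_eq0 g_S).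
by rewrite mulmx0 subr0 -!scalemxAl -!mulmxA diag_mx_sel_tr.
Qed.

End Reduction.

Section SelfAdjoint.
Variables (R : realFieldType) (k : nat) (A P : 'M[R]_k).
Hypotheses (P_pd : forall x : 'cV_k, x != 0 -> 0 < (x^T *m P *m x) 0 0)
  (A_sa : forall x y : 'cV_k, (A *m x)^T *m P *m y = x^T *m P *m (A *m y))
  (A_nsd : forall x : 'cV_k, (x^T *m P *m (A *m x)) 0 0 <= 0).

(* p and q stand for the real and imaginary parts of an eigenvector for a + i b. *)
Lemma selfadjoint_rotation_pair (p q : 'cV_k) a b :
  A *m p = a *: p - b *: q -> A *m q = b *: p + a *: q -> (p != 0) || (q != 0) ->
  b = 0 /\ a <= 0.
Proof.
move=> Ap Aq pq0.
pose B (x y : 'cV[R]_k) := (x^T *m P *m y) 0 0.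
have B_ge0 x : 0 <= B x x.
  by have [->|/P_pd/ltW //] := eqVneq x 0; rewrite /B mulmx0 mxE.
have B_gt0 : 0 < B p p + B q q.
  case/orP: pq0 => [/P_pd|/P_pd] Bx; [exact: ltr_wpDr (B_ge0 q) Bx | exact: ltr_wpDl (B_ge0 p) Bx].
have BDr x y1 y2 c1 c2 : B x (c1 *: y1 + c2 *: y2) = c1 * B x y1 + c2 * B x y2.
  by rewrite /B mulmxDr -!scalemxAr !mxE.
have BDl x1 x2 y c1 c2 : B (c1 *: x1 + c2 *: x2) y = c1 * B x1 y + c2 * B x2 y.
  by rewrite /B linearD !linearZ /= !mulmxDl -!scalemxAl !mxE.
have sa : B (A *m p) q = B p (A *m q) by rewrite /B A_sa.
rewrite Ap Aq -scaleNr BDl BDr in sa.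
have b0 : b = 0.
  have : b * (B p p + B q q) = 0 by rewrite mulrDr; lra.
  by move/eqP; rewrite mulf_eq0 (gt_eqF B_gt0) orbF => /eqP.
split => //.
have := A_nsd p; have := A_nsd q.
rewrite -/(B q (A *m q)) -/(B p (A *m p)) Aq Ap -scaleNr !BDr b0 => Bq Bp.
nra.
Qed.

End SelfAdjoint.

Section ComplexEigenvalues.
Variable R : rcfType.
Local Notation Re := (@complex.Re R).
Local Notation Im := (@complex.Im R).

Lemma complex_Re_sum (I : finType) (F : I -> R[i]) : Re (\sum_i F i) = \sum_i Re (F i).
Proof. by apply: (big_morph _ (fun x y => _)) => //; case=> a b [c d]. Qed.

Lemma complex_Im_sum (I : finType) (F : I -> R[i]) : Im (\sum_i F i) = \sum_i Im (F i).
Proof. by apply: (big_morph _ (fun x y => _)) => //; case=> a b [c d]. Qed.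

Lemma complex_ReM (x y : R[i]) : Re (x * y) = Re x * Re y - Im x * Im y.
Proof. by case: x => a b; case: y => c d. Qed.

Lemma complex_ImM (x y : R[i]) : Im (x * y) = Re x * Im y + Im x * Re y.
Proof. by case: x => a b; case: y => c d. Qed.

Lemma selfadjoint_eigenvalue_nonpos k (A P : 'M[R]_k)
  (P_pd : forall x : 'cV_k, x != 0 -> 0 < (x^T *m P *m x) 0 0)
  (A_sa : forall x y : 'cV_k, (A *m x)^T *m P *m y = x^T *m P *m (A *m y))
  (A_nsd : forall x : 'cV_k, (x^T *m P *m (A *m x)) 0 0 <= 0) z :
  eigenvalue (map_mx (real_complex R) A) z -> Im z = 0 /\ Re z <= 0.
Proof.
case/eigenvalue_colP => v Av v0.
pose p := map_mx Re v; pose q := map_mx Im v.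
have Av_a a : \sum_b (A a b)%:C%C * v b 0 = z * v a 0.
  by move/matrixP: Av => /(_ a 0); rewrite !mxE => <-; apply: eq_bigr => b _; rewrite mxE.
have Ap : A *m p = Re z *: p - Im z *: q.
  apply/matrixP => a j; rewrite (ord1 j) !mxE -complex_ReM -Av_a complex_Re_sum.
  by apply: eq_bigr => b _; rewrite complex_ReM /= mul0r subr0 mxE.
have Aq : A *m q = Im z *: p + Re z *: q.
  apply/matrixP => a j; rewrite (ord1 j) !mxE addrC -complex_ImM -Av_a complex_Im_sum.
  by apply: eq_bigr => b _; rewrite complex_ImM /= mul0r addr0 mxE.
apply: (selfadjoint_rotation_pair P_pd A_sa A_nsd Ap Aq).
apply: contraR v0; rewrite negb_or !negbK => /andP[/eqP/matrixP p0 /eqP/matrixP q0].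
apply/eqP/matrixP => a j; move: (p0 a j) (q0 a j); rewrite !mxE.
by case: (v a j) => x y /= -> ->.
Qed.

End ComplexEigenvalues.

Lemma diag_mx_form_gt0 (R : realFieldType) n (d : 'rV[R]_n) :
  (forall a, 0 < d 0 a) -> forall x : 'cV_n, x != 0 -> 0 < (x^T *m diag_mx d *m x) 0 0.
Proof.
move=> d_gt0 x /cV0Pn[a xa].
have -> : (x^T *m diag_mx d *m x) 0 0 = \sum_b d 0 b * x b 0 ^+ 2.
  by rewrite mul_mx_diag mxE; apply: eq_bigr => b _; rewrite !mxE; ring.
rewrite (bigD1 a) //=; apply: ltr_wpDr.
  by apply: sumr_ge0 => b _; rewrite mulr_ge0 ?sqr_ge0 ?ltW.
by rewrite mulr_gt0 // exprn_even_gt0.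
Qed.

Section ReducedForm.
Variables (R : realFieldType) (m : nat) (S : {set 'I_m}) (M : 'M[R]_m) (w : 'rV[R]_m).
Local Notation sel := (sel_mx R S).
Local Notation D := (diag_mx (w *m sel^T)).
Local Notation A := (reduced_mx S M w).

Lemma reduced_weight_pd : (forall i, i \in S -> 0 < w 0 i) ->
  forall x : 'cV_#|S|, x != 0 -> 0 < (x^T *m D *m x) 0 0.
Proof. by move=> w_gt0; apply: diag_mx_form_gt0 => a; rewrite mulmx_sel_trE w_gt0 ?enum_valP. Qed.

Lemma reduced_mx_selfadjoint : M^T = M ->
  forall x y : 'cV_#|S|, (A *m x)^T *m D *m y = x^T *m D *m (A *m y).
Proof.
move=> Msym x y; rewrite trmx_mul -(mulmxA x^T) /reduced_mx !trmx_mul trmxK tr_diag_mx Msym.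
by rewrite !mulmxA.
Qed.

Lemma reduced_mx_form_le0 : (forall x : 'cV_m, (x^T *m M *m x) 0 0 <= 0) ->
  forall x : 'cV_#|S|, (x^T *m D *m (A *m x)) 0 0 <= 0.
Proof.
move=> M_nsd x; have := M_nsd (sel^T *m D *m x).
by rewrite !trmx_mul trmxK tr_diag_mx /reduced_mx !mulmxA.
Qed.

End ReducedForm.

Section SpectrumOfGradientJacobian.
Variables (R : realType) (m : nat) (S : {set 'I_m}) (g w : 'rV[R]_m) (M : 'M[R]_m).
Hypotheses (g_S : forall i, i \in S -> g 0 i = 0)
  (w_notS : forall i, i \notin S -> w 0 i = 0) (w_S : forall i, i \in S -> 0 < w 0 i)
  (M_sym : M^T = M) (M_nsd : forall x : 'cV_m, (x^T *m M *m x) 0 0 <= 0).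
Local Notation J := (diag_mx g + diag_mx w *m M).
Local Notation A := (reduced_mx S M w).

Lemma ceigen_reduction z :
  ceigen J z <-> (exists2 i, i \notin S & z = (g 0 i)%:C%C) \/ ceigen A z.
Proof.
rewrite /ceigen map_mxD map_mxM !map_diag_mx map_reduced_mx.
have gC_S i : i \in S -> (map_mx (real_complex R) g) 0 i = 0 by move=> iS; rewrite mxE g_S.
have wC_notS i : i \notin S -> (map_mx (real_complex R) w) 0 i = 0.
  by move=> iS; rewrite mxE w_notS.
have wC_S i : i \in S -> (map_mx (real_complex R) w) 0 i != 0.
  by move=> iS; rewrite mxE fmorph_eq0 gt_eqF ?w_S.
split=> [/(eigenvalue_reduction gC_S wC_notS wC_S)|[[i iS ->]|]].
- by case=> [[i iS ->]|]; [left; exists i; rewrite ?mxE|right].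
- have := eigenvalue_outside (map_mx (real_complex R) g) (map_mx (real_complex R) M)
    wC_notS iS.
  by rewrite mxE.
- exact: eigenvalue_reduced_sub gC_S wC_notS wC_S z.
Qed.

Lemma ceigen_reduced_nonpos z : ceigen A z -> complex.Im z = 0 /\ complex.Re z <= 0.
Proof.
apply: selfadjoint_eigenvalue_nonpos (reduced_weight_pd w_S) _ _ z => [x y|x].
  exact: reduced_mx_selfadjoint.
exact: reduced_mx_form_le0.
Qed.

Lemma eigenvalue_pos_outside :
  (exists2 r : R, 0 < r & eigenvalue J r) <-> (exists i, w 0 i = 0 /\ 0 < g 0 i).
Proof.
have w_S' i : i \in S -> w 0 i != 0 by move=> iS; rewrite gt_eqF ?w_S.
split=> [[r r_gt0 /(eigenvalue_reduction g_S w_notS w_S')]|[i [wi gi]]].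
  case=> [[i iS ri]|Ar]; first by exists i; rewrite w_notS // -ri.
  have ArC : ceigen A r%:C%C by rewrite /ceigen eigenvalue_map.
  by have [_] := ceigen_reduced_nonpos ArC; rewrite /= leNgt r_gt0.
exists (g 0 i) => //; apply: (eigenvalue_outside _ _ w_notS).
by apply/negP => /w_S; rewrite wi ltxx.
Qed.

End SpectrumOfGradientJacobian.

Lemma sum_eq_in {R : nzRingType} (T : finType) (A : {pred T}) (j : T) :
  \sum_(i in A) ((j == i)%:R : R) = (j \in A)%:R.
Proof.
case: (boolP (j \in A)) => jA; last first.
  by rewrite big1 // => i iA; case: eqP => // ji; rewrite ji iA in jA.
rewrite (bigD1 j) //= eqxx big1 ?addr0 // => i /andP[_ ij].
by rewrite eq_sym (negbTE ij).
Qed.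

Lemma is_derive_ext (R : numFieldType) (V W : normedModType R) (f g : V -> W) x v df dg :
  is_derive x v f df -> f =1 g -> df = dg -> is_derive x v g dg.
Proof. by move=> D /funext <- <-. Qed.

Lemma is_derive_big (R : numFieldType) (V W : normedModType R) (I : eqType) (r : seq I)
  (P : pred I) (h : I -> V -> W) (dh : I -> W) (x v : V) :
  (forall i, P i -> is_derive x v (h i) (dh i)) ->
  is_derive x v (fun y => \sum_(i <- r | P i) h i y) (\sum_(i <- r | P i) dh i).
Proof.
move=> hd; elim: r => [|a r IH].
  apply: is_derive_ext (is_derive_cst 0 x v) _ _ => [y|]; by rewrite big_nil.
rewrite big_cons; case: ifP => Pa.
  by apply: is_derive_ext (is_deriveD (hd a Pa) IH) _ _ => // y; rewrite big_cons Pa.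
by apply: is_derive_ext IH _ _ => // y; rewrite big_cons Pa.
Qed.

Section LineDerivatives.
Variables (R : realType) (m : nat) (w : 'rV[R]_m) (j : 'I_m).
Local Notation line h := (h *: ej R j + w).

Lemma partialE (f : 'rV[R]_m -> R) : partial f j w = 'D_1 (fun h : R => f (line h)) 0.
Proof.
rewrite /partial /derive; set d := (fun h : R => h^-1 *: _).
set d' := (fun h : R => h^-1 *: _); suff -> : d = d' by [].
by apply/funext => h; rewrite /d /d' /= scale0r add0r addr0 [h%:A]mulr1.
Qed.

Lemma is_derive_coord i : is_derive (0 : R) 1 (fun h => (line h) 0 i) (j == i)%:R.
Proof.
have D := is_deriveD (is_deriveZ ((j == i)%:R : R) (is_derive_id (0 : R) 1))
  (is_derive_cst (w 0 i) (0 : R) 1).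
apply: (is_derive_ext D).
  by move=> h; rewrite !mxE /= mulrC eq_sym.
by rewrite addr0 [_%:A]mulr1.
Qed.

Lemma is_derive_vsum (I : {set 'I_m}) :
  is_derive (0 : R) 1 (fun h => vsum (line h) I) (j \in I)%:R.
Proof.
by rewrite /vsum -sum_eq_in; apply: is_derive_big => i _; exact: is_derive_coord.
Qed.

Lemma is_derive_ln_vsum (I : {set 'I_m}) : 0 < vsum w I ->
  is_derive (0 : R) 1 (fun h => ln (vsum (line h) I)) ((j \in I)%:R / vsum w I).
Proof.
move=> wI; rewrite mulrC.
have line0 : vsum (line 0) I = vsum w I by rewrite scale0r add0r.
have Dln : is_derive (vsum (line 0) I) 1 (@ln R) (vsum w I)^-1.
  by rewrite line0; exact: is_derive1_ln.
exact: (is_derive1_comp Dln (is_derive_vsum I)).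
Qed.

Lemma is_derive_coord_div_vsum i (I : {set 'I_m}) : 0 < vsum w I ->
  is_derive (0 : R) 1 (fun h => (line h) 0 i / vsum (line h) I)
    ((j == i)%:R / vsum w I - w 0 i * (j \in I)%:R / vsum w I ^+ 2).
Proof.
move=> wI.
have line0 : vsum (line 0) I = vsum w I by rewrite scale0r add0r.
have wI0 : vsum (line 0) I != 0 by rewrite line0 gt_eqF.
have Dinv := is_deriveV (f := fun h => vsum (line h) I) wI0 (is_derive_vsum I).
apply: is_derive_ext (is_deriveM (is_derive_coord i) Dinv) _ _ => //.
rewrite !line0 scale0r add0r /GRing.scale /=.
by field; rewrite gt_eqF.
Qed.

End LineDerivatives.

Section HypergraphJacobian.
Variables (R : realType) (m : nat) (E : {set {set 'I_m}}) (w : 'rV[R]_m).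
Hypothesis vsum_gt0 : forall I, I \in E -> 0 < vsum w I.
Local Notation line j h := (h *: ej R j + w).

Definition gradL : 'rV[R]_m :=
  \row_j (-1 + (Nr R E)^-1 * \sum_(I in E) ((j \in I)%:R / vsum w I)).

Definition hessL : 'M[R]_m :=
  \matrix_(i, j) - ((Nr R E)^-1 * \sum_(I in E) ((i \in I)%:R * (j \in I)%:R / vsum w I ^+ 2)).

Lemma partial_Lf j : partial (Lf E) j w = gradL 0 j.
Proof.
rewrite partialE mxE; apply: derive_val.
have Dsum : is_derive (0 : R) 1 (fun h => \sum_i (line j h) 0 i) (\sum_i (j == i)%:R).
  by apply: is_derive_big => i _; exact: is_derive_coord.
have Dln : is_derive (0 : R) 1 (fun h => \sum_(I in E) ln (vsum (line j h) I))
    (\sum_(I in E) ((j \in I)%:R / vsum w I)).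
  by apply: is_derive_big => I IE; exact/is_derive_ln_vsum/vsum_gt0.
apply: is_derive_ext (is_deriveD (is_deriveN Dsum) (is_deriveZ (Nr R E)^-1 Dln)) _ _ => //.
by rewrite (sum_eq_in predT) /GRing.scale.
Qed.

Lemma partial_Ff i j : partial (Ff E i) j w = (diag_mx gradL + diag_mx w *m hessL) i j.
Proof.
rewrite partialE mul_diag_mx !mxE; apply: derive_val.
have Dsum : is_derive (0 : R) 1
    (fun h => \sum_(I in E | i \in I) (line j h) 0 i / vsum (line j h) I)
    (\sum_(I in E | i \in I)
       ((j == i)%:R / vsum w I - w 0 i * (j \in I)%:R / vsum w I ^+ 2)).
  apply: is_derive_big => I /andP[IE _]; exact/is_derive_coord_div_vsum/vsum_gt0.
apply: is_derive_ext (is_deriveD (is_deriveN (is_derive_coord w j i))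
  (is_deriveZ (Nr R E)^-1 Dsum)) _ _ => //.
rewrite big_mkcondr /= /GRing.scale /= eq_sym.
have -> : \sum_(I in E) (if i \in I
      then (i == j)%:R / vsum w I - w 0 i * (j \in I)%:R / vsum w I ^+ 2 else 0)
    = \sum_(I in E) ((i == j)%:R * ((i \in I)%:R / vsum w I)
        - w 0 i * ((i \in I)%:R * (j \in I)%:R / vsum w I ^+ 2)).
  by apply: eq_bigr => I _; case: (i \in I) => /=; ring.
rewrite big_split /= sumrN -!mulr_sumr; case: (i == j); ring.
Qed.

Lemma JF_E : JF E w = diag_mx gradL + diag_mx w *m hessL.
Proof. by apply/matrixP => i j; rewrite mxE partial_Ff. Qed.

Lemma hessL_sym : hessL^T = hessL.
Proof.
apply/matrixP => i j; rewrite !mxE; congr (- (_ * _)); apply: eq_bigr => I _.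
by rewrite [(j \in I)%:R * _]mulrC.
Qed.

(* x^T hessL x = - 1/N sum_(I in E) (x_I / w_I)^2 *)
Lemma hessL_form_le0 (x : 'cV[R]_m) : (x^T *m hessL *m x) 0 0 <= 0.
Proof.
pose y (I : {set 'I_m}) a := x a 0 * (a \in I)%:R.
pose c I := (Nr R E)^-1 / vsum w I ^+ 2.
have entry a b : x^T 0 a * hessL a b * x b 0 = - \sum_(I in E) c I * (y I a * y I b).
  rewrite !mxE mulr_sumr mulrN mulNr mulr_sumr mulr_suml; congr (- _).
  by apply: eq_bigr => I _; rewrite /c /y; ring.
have sq I : (\sum_a y I a) ^+ 2 = \sum_b \sum_a y I a * y I b.
  by rewrite expr2 mulr_sumr; apply: eq_bigr => b _; rewrite mulr_suml.
rewrite mxE (eq_bigr (fun b => - \sum_(I in E) c I * \sum_a y I a * y I b)); last first.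
  move=> b _; rewrite mxE mulr_suml; under eq_bigr do rewrite entry.
  rewrite sumrN exchange_big /=; congr (- _); apply: eq_bigr => I _.
  by rewrite mulr_sumr.
rewrite sumrN exchange_big /= oppr_le0 sumr_ge0 // => I _.
by rewrite -mulr_sumr -sq mulr_ge0 ?sqr_ge0 ?divr_ge0 ?invr_ge0 ?ler0n ?sqr_ge0.
Qed.

End HypergraphJacobian.

Theorem mainTheorem7 (R : realType) (m : nat) (E : {set {set 'I_m}}) (c : R)
  (hE : hypergraph E) (hc0 : 0 < c) (hc1 : c < (Nr R E)^-1)
  (S : {set 'I_m}) (w : 'rV[R]_m) (hw : Lambda_S E c S w) :
  (forall z : R[i], ceigen (JF E w) z ->
     (forall i, i \notin S -> z != (partial (Lf E) i w)%:C%C) ->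
     complex.Im z = 0 /\ complex.Re z <= 0)
  /\
  (exists (k : nat) (A P : 'M[R]_k),
     P^T = P /\
     (forall x : 'cV[R]_k, x != 0 -> 0 < (x^T *m P *m x) 0 0) /\
     (forall x y : 'cV[R]_k, (A *m x)^T *m P *m y = x^T *m P *m (A *m y)) /\
     (forall x : 'cV[R]_k, (x^T *m P *m (A *m x)) 0 0 <= 0) /\
     (forall z : R[i], ceigen (JF E w) z <->
        ((exists2 i, i \notin S & z = (partial (Lf E) i w)%:C%C) \/ ceigen A z)))
  /\
  ((exists2 r : R, 0 < r & eigenvalue (JF E w) r) <->
   (exists i : 'I_m, w 0 i = 0 /\ 0 < partial (Lf E) i w)).
Proof.
case: hw => [[[w_ge0 [_ wE_ge]] w_supp] gradS].
have vsum_gt0 I : I \in E -> 0 < vsum w I by move=> IE; exact: lt_le_trans hc0 (wE_ge I IE).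
have dL i : partial (Lf E) i w = gradL E w 0 i := partial_Lf vsum_gt0 i.
have g_S i : i \in S -> gradL E w 0 i = 0 by move=> iS; rewrite -dL gradS.
have w_notS i : i \notin S -> w 0 i = 0 by move/(proj2 (w_supp i)).
have w_S i : i \in S -> 0 < w 0 i.
  by move=> iS; rewrite lt_def w_ge0 andbT; apply/eqP => /(proj1 (w_supp i)); rewrite iS.
have M_sym := hessL_sym E w; have M_nsd := hessL_form_le0 E w.
rewrite JF_E //; split; [|split].
- move=> z /(ceigen_reduction _ g_S w_notS w_S) [[i iS ->]|].
    by move/(_ i iS); rewrite dL eqxx.
  by move=> /(ceigen_reduced_nonpos w_S M_sym M_nsd).
- exists #|S|, (reduced_mx S (hessL E w) w), (diag_mx (w *m (sel_mx R S)^T)).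
  split; first exact: tr_diag_mx.
  split; first exact: reduced_weight_pd w_S.
  split; first exact: reduced_mx_selfadjoint w M_sym.
  split; first exact: reduced_mx_form_le0 w M_nsd.
  move=> z; rewrite (ceigen_reduction _ g_S w_notS w_S).
  by split=> -[[i iS ->]|Az]; by [left; exists i; rewrite ?dL | right].
rewrite (eigenvalue_pos_outside g_S w_notS w_S M_sym M_nsd).
by split=> -[i wg]; exists i; rewrite ?dL in wg *.
Qed.
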